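(* Let $G$ be a finite group and let $x_1, \dots, x_n \in G$ be representatives of the distinct rational classes of $G$. Let $\chi \subseteq \{x_1, \dots, x_n\}$ be a largest subset such that for any two distinct $x_i, x_j \in \chi$ we have $\mathrm{Sol}_G(x_i) \neq \mathrm{Sol}_G(x_j)^g$ for all $g \in G$. Then $$|\mathrm{Solv}(G)| = \sum_{x \in \chi} [G : N_G(\mathrm{Sol}_G(x))].$$
   Context: For a finite group $G$ and $x \in G$, the solvabilizer of $x$ in $G$ is $\mathrm{Sol}_G(x) = \{y \in G : \langle x, y \rangle \text{ is solvable}\}$; $\mathrm{Solv}(G) = \{\mathrm{Sol}_G(x) : x \in G\}$ is the set of distinct solvabilizers. The rational class of $x \in G$ is the union of the conjugacy classes $(x^i)^G$ over all integers $i$ with $\gcd(|x|, i) = 1$. For a subset $X \subseteq G$ and $g \in G$, $X^g = \{g^{-1}xg : x \in X\}$, and $N_G(X) = \{g \in G : X^g = X\}$ is the normalizer of the subset $X$. *)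

From HB Require Import structures.
From mathcomp Require Import all_boot all_order all_fingroup all_solvable.
Set Implicit Arguments. Unset Strict Implicit. Unset Printing Implicit Defensive.
Local Open Scope group_scope.

Definition Sol (gT : finGroupType) (G : {set gT}) (x : gT) : {set gT} :=
  [set y in G | solvable <<[set x; y]>>].

Definition Solv (gT : finGroupType) (G : {set gT}) : {set {set gT}} :=
  [set Sol G x | x in G].

Definition rat_class (gT : finGroupType) (G : {set gT}) (x : gT) : {set gT} :=
  \bigcup_(i < #[x] | coprime #[x] i) ((x ^+ i) ^: G).

Definition rat_class_reps (gT : finGroupType) (G : {set gT}) (X : {set gT}) :=
  [/\ X \subset G,
      {in X &, forall a b, rat_class G a = rat_class G b -> a = b} &
      forall y, y \in G -> exists2 a, a \in X & y \in rat_class G a].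

Definition sol_nonconj (gT : finGroupType) (G : {set gT}) (Y : {set gT}) :=
  {in Y &, forall a b, a != b -> forall g, g \in G -> Sol G a != Sol G b :^ g}.

(* Conjugating x by g conjugates Sol_G(x) by g, and Sol_G(x) only depends on
   the cyclic group <x>, so the solvabilizers of the elements of a rational
   class form a single G-orbit of subsets.  A largest family of rational class
   representatives with pairwise non-conjugate solvabilizers therefore meets
   every such orbit exactly once, and Solv(G) is the disjoint union of the
   orbits of its members; the orbit of Sol_G(x) has [G : N_G(Sol_G(x))]
   elements. *)

From HB Require Import structures.
From mathcomp Require Import all_boot all_order all_fingroup all_solvable.

Set Implicit Arguments.
Unset Strict Implicit.
Unset Printing Implicit Defensive.

Local Open Scope group_scope.

Lemma card_bigcup_orbit (aT : finGroupType) (rT : finType)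
    (to : {action aT &-> rT}) (G : {group aT}) (I : finType) (J : {set I})
    (u : I -> rT) :
  {in J &, forall i j, i != j -> u i \notin orbit to G (u j)} ->
  #|\bigcup_(i in J) orbit to G (u i)| = (\sum_(i in J) #|orbit to G (u i)|)%N.
Proof.
move=> ncJ; pose O i := orbit to G (u i).
have tiO : {in J &, forall i j, j != i -> [disjoint O i & O j]}.
  move=> i j Ji Jj nji; rewrite -setI_eq0; apply/set0Pn=> -[v /setIP[Oiv Ojv]].
  case/negP: (ncJ j i Jj Ji nji); rewrite orbit_sym in Ojv.
  exact: orbit_trans Ojv Oiv.
have O_neq0 : set0 \notin O @: J.
  apply/imsetP=> -[i _ O0]; have := orbit_refl to G (u i).
  by rewrite -/(O i) -O0 inE.
have [tiP injO] := trivIimset tiO O_neq0.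
have partO : partition (O @: J) (\bigcup_(i in J) O i).
  by rewrite /partition cover_imset eqxx tiP O_neq0.
by rewrite (card_partition partO) big_imset.
Qed.

Section Solvabilizers.
Variables (gT : finGroupType) (G : {group gT}).

Lemma SolJ x g : g \in G -> Sol G (x ^ g) = Sol G x :^ g.
Proof.
move=> Gg; apply/setP=> y; rewrite mem_conjg !inE groupJr ?groupV //.
case: (y \in G) => //=.
have -> : [set x ^ g; y] = [set x; y ^ g^-1] :^ g.
  by rewrite conjUg !conjg_set1 conjgKV.
by rewrite genJ -(isog_sol (conj_isog _ g)).
Qed.

Lemma Sol_cycle x z : <[x]> = <[z]> -> Sol G x = Sol G z.
Proof.
move=> eq_xz; apply/setP=> y; rewrite !inE.
have genE w : <<[set w; y]>> = <[w]> <*> [set y] by rewrite joing_idl.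
by rewrite !genE eq_xz.
Qed.

Lemma Sol_expg_coprime x i : coprime #[x] i -> Sol G (x ^+ i) = Sol G x.
Proof.
rewrite -generator_coprime => /eqP eq_x_xi.
by apply: Sol_cycle; rewrite eq_x_xi.
Qed.

Lemma Sol_rat_class a y : y \in rat_class G a -> Sol G y \in Sol G a :^: G.
Proof.
case/bigcupP=> i cop_i /imsetP[g Gg ->].
by rewrite SolJ // Sol_expg_coprime // imset_f.
Qed.

Lemma sol_nonconjE (Y : {set gT}) :
  sol_nonconj G Y <->
  {in Y &, forall a b, a != b -> Sol G a \notin Sol G b :^: G}.
Proof.
split=> [ncY a b Ya Yb nab | ncY a b Ya Yb nab g Gg].
  by apply/imsetP=> -[g Gg Eab]; case/eqP: (ncY a b Ya Yb nab g Gg).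
by apply: contra (ncY a b Ya Yb nab) => /eqP->; rewrite imset_f.
Qed.

Lemma sol_nonconjU1 a (Y : {set gT}) :
    sol_nonconj G Y -> {in Y, forall b, Sol G a \notin Sol G b :^: G} ->
  sol_nonconj G (a |: Y).
Proof.
move=> /sol_nonconjE ncY ncaY; apply/sol_nonconjE=> u v.
case/setU1P=> [->|Yu] /setU1P[->|Yv] //; first by rewrite eqxx.
- by move=> _; apply: ncaY.
- by move=> _; apply: contra (ncaY u Yu); rewrite orbit_sym.
- exact: ncY.
Qed.

Lemma max_sol_nonconj_conjugates (X chi : {set gT}) :
    chi \subset X -> sol_nonconj G chi ->
    (forall Y : {set gT}, Y \subset X -> sol_nonconj G Y -> #|Y| <= #|chi|)%N ->
  forall a, a \in X -> exists2 b, b \in chi & Sol G a \in Sol G b :^: G.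
Proof.
move=> sCX ncC maxC a Xa; apply/exists_inP; apply: contraT => /exists_inPn ncaC.
have chi'a : a \notin chi := contraL (ncaC a) (orbit_refl 'Js G _).
have sYX : a |: chi \subset X by rewrite subUset sub1set Xa sCX.
have := maxC _ sYX (sol_nonconjU1 ncC ncaC).
by rewrite cardsU1 chi'a ltnn.
Qed.

Lemma Solv_bigcup_conjugates (Y : {set gT}) :
    Y \subset G ->
    (forall y, y \in G -> exists2 b, b \in Y & Sol G y \in Sol G b :^: G) ->
  Solv G = \bigcup_(b in Y) (Sol G b :^: G).
Proof.
move=> sYG coverY; apply/setP=> A; apply/imsetP/bigcupP=> [[y Gy ->] | [b Yb]].
  exact: coverY.
case/imsetP=> g Gg ->; exists (b ^ g); first by rewrite groupJ // (subsetP sYG).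
by rewrite SolJ.
Qed.

End Solvabilizers.

Theorem theorem6p1 (gT : finGroupType) (G : {group gT}) (X chi : {set gT}) :
  rat_class_reps G X ->
  chi \subset X ->
  sol_nonconj G chi ->
  (forall Y : {set gT}, Y \subset X -> sol_nonconj G Y -> #|Y| <= #|chi|)%N ->
  #|Solv G| = (\sum_(x in chi) #|G : 'N_G(Sol G x)|)%N.
Proof.
(* The representatives need not have distinct rational classes. *)
case=> sXG _ coverX sCX ncC maxC.
have coverC y : y \in G -> exists2 b, b \in chi & Sol G y \in Sol G b :^: G.
  move=> Gy; have [a Xa ya] := coverX y Gy.
  have [b Cb ab] := max_sol_nonconj_conjugates sCX ncC maxC Xa.
  by exists b; last exact: orbit_trans (Sol_rat_class ya) ab.
rewrite (Solv_bigcup_conjugates (subset_trans sCX sXG) coverC).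
rewrite (card_bigcup_orbit (to := 'Js)); last exact/sol_nonconjE.
by apply: eq_bigr => b _; apply: card_conjugates.
Qed.
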